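(* Let $P_n$ be a path on $n$ vertices with an arbitrary total order on its vertices. Then $R_o(P_n,P_n)\le 2^{\lceil\log_2 n\rceil\cdot(\lceil\log_2 n\rceil+1)}$.
   Context: An ordered graph is a graph with a total order $\prec$ on its vertices. An ordered graph $F$ is contained in an ordered graph $H$ if there is an injective map $V(F)\to V(H)$ preserving both the vertex order and adjacency. The ordered Ramsey number $R_o(F,G)$ is the smallest $N$ such that every red/blue colouring of the edges of the ordered complete graph $K_N$ contains a blue copy of $F$ or a red copy of $G$. *)

From mathcomp Require Import all_boot all_fingroup.
Set Implicit Arguments. Unset Strict Implicit. Unset Printing Implicit Defensive.

(* An ordered graph on n vertices: vertex set 'I_n, ordered by the natural
   order of ordinals; adjacency given by a relation (intended symmetric and
   irreflexive). *)

Definition ord_contains (m N : nat) (eF : rel 'I_m) (eH : rel 'I_N) : Prop :=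
  exists f : 'I_m -> 'I_N,
    (forall i j : 'I_m, i < j -> f i < f j) /\
    (forall i j : 'I_m, eF i j -> eH (f i) (f j)).

(* A red/blue colouring of the edges of the ordered complete graph K_N:
   a symmetric function c; c i j = true means blue, false means red. *)
Definition colouring (N : nat) (c : 'I_N -> 'I_N -> bool) : Prop :=
  forall i j, c i j = c j i.

Definition blue_graph N (c : 'I_N -> 'I_N -> bool) : rel 'I_N :=
  fun i j => (i != j) && c i j.
Definition red_graph N (c : 'I_N -> 'I_N -> bool) : rel 'I_N :=
  fun i j => (i != j) && ~~ c i j.

Definition ramsey_arrow (m k : nat) (eF : rel 'I_m) (eG : rel 'I_k) (N : nat)
  : Prop :=
  forall c : 'I_N -> 'I_N -> bool, colouring c ->
    ord_contains eF (blue_graph c) \/ ord_contains eG (red_graph c).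

Definition is_ordered_ramsey_number (m k : nat) (eF : rel 'I_m) (eG : rel 'I_k)
  (r : nat) : Prop :=
  ramsey_arrow eF eG r /\ (forall N, ramsey_arrow eF eG N -> r <= N).

(* The path on n vertices with an arbitrary total order on its vertices:
   vertex set 'I_n (natural order); pos u is the position of u along the
   path, so u v are adjacent iff their positions are consecutive. Every
   ordered path on n vertices arises this way for some permutation pos. *)
Definition ordered_path (n : nat) (pos : {perm 'I_n}) : rel 'I_n :=
  fun u v => (val (pos u) == (pos v).+1) || (val (pos v) == (pos u).+1).

From mathcomp Require Import all_boot all_fingroup.
From mathcomp Require Import zify.
From Stdlib Require Import Classical.
From Stdlib Require Wf_nat.
Set Implicit Arguments. Unset Strict Implicit. Unset Printing Implicit Defensive.

(* Colourings are handled as symmetric maps c : nat -> nat -> bool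
   (true = blue) on an initial segment [0, M) of nat.
   - Key dichotomy (blue_path_or_red_pair): if M >= n * 2s, cut [0, n*2s) into
     n consecutive blocks of length 2s and visit them in the order in which
     the path visits the vertices. Let D_0 be the first visited block and
     D_(t+1) the vertices of the next visited block having a blue neighbour in
     D_t. If some D_(t+1) misses s vertices of its block, then D_t and the
     missed vertices form two sets of size s, one below the other, with only
     red edges between them; otherwise D_(n-1) is nonempty and a blue walk
     ending there is a blue copy of the path, increasing because the blocks
     are ordered like the vertices they stand for.
   - Recursion (blue_path_or_red_clique): if M >= (2n)^l, recursing into both
     sets of a red pair gives a blue path or a red clique of size 2^l.
   - For l = k we have (2n)^k <= 2^(k(k+1)), and a red clique on 2^k >= n
     vertices contains a red copy of the path; the Ramsey number, the least
     such N, exists classically and is below this bound. *)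

Lemma count_sub_split (T : Type) (B W : pred T) (s : seq T) :
  (forall v, W v -> B v) ->
  count W s + count (fun v => B v && ~~ W v) s = count B s.
Proof.
move=> WB; elim: s => //= x s IH.
by case Wx: (W x); [rewrite (WB _ Wx) | case: (B x)] => /=; lia.
Qed.

Lemma increasing_enum (X : pred nat) (M s : nat) : s <= count X (iota 0 M) ->
  exists h : nat -> nat, (forall i, i < s -> X (h i) && (h i < M)) /\
    (forall i j, i < j -> j < s -> h i < h j).
Proof.
move=> Hs; set L := filter X (iota 0 M).
have sizeL : size L = count X (iota 0 M) by rewrite size_filter.
have sortedL : sorted ltn L.
  by apply: sorted_filter; [exact: ltn_trans | exact: iota_ltn_sorted].
exists (nth 0 L); split=> [i Hi | i j Hij Hj].
  have : nth 0 L i \in L by apply: mem_nth; rewrite sizeL; lia.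
  by rewrite mem_filter mem_iota.
by apply: (sorted_ltn_nth ltn_trans 0 sortedL) => //; rewrite inE sizeL; lia.
Qed.

Definition block (d x : nat) : pred nat := fun v => (x * d <= v) && (v < x * d + d).

Lemma block_lt d x y u v : x < y -> block d x u -> block d y v -> u < v.
Proof.
rewrite /block => xy /andP[_ ?] /andP[? _].
by have := leq_mul xy (leqnn d); rewrite mulSn; lia.
Qed.

Lemma block_bound d n x v : x < n -> block d x v -> v < n * d.
Proof.
rewrite /block => xn /andP[_ ?].
by have := leq_mul xn (leqnn d); rewrite mulSn; lia.
Qed.

Lemma count_block d x M : x * d + d <= M -> count (block d x) (iota 0 M) = d.
Proof.
move=> HM; have -> : M = x * d + (d + (M - (x * d + d))) by lia.
rewrite !iotaD !count_cat add0n.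
rewrite (@eq_in_count _ _ pred0 (iota 0 _)); last first.
  by move=> v; rewrite mem_iota /block => /andP[_ ?]; apply/negbTE/negP => /andP[]; lia.
rewrite (@eq_in_count _ _ predT (iota _ d)); last first.
  by move=> v; rewrite mem_iota /block => ->.
rewrite (@eq_in_count _ _ pred0 (iota (x * d + d) _)); last first.
  by move=> v; rewrite mem_iota /block => /andP[? _]; apply/negbTE/negP => /andP[]; lia.
by rewrite !count_pred0 count_predT size_iota; lia.
Qed.

Definition blue_path (n : nat) (pos : {perm 'I_n}) (c : nat -> nat -> bool)
    (P : pred nat) : Prop :=
  exists f : 'I_n -> nat, (forall x, P (f x)) /\
    (forall x y : 'I_n, x < y -> f x < f y) /\
    (forall x y : 'I_n, ordered_path pos x y -> c (f x) (f y)).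

Definition red_clique (c : nat -> nat -> bool) (P : pred nat) (m : nat) : Prop :=
  exists g : nat -> nat, (forall i, i < m -> P (g i)) /\
    (forall i j, i < j -> j < m -> g i < g j /\ c (g i) (g j) = false).

Definition red_pair (c : nat -> nat -> bool) (M s : nat) : Prop :=
  exists X Y : pred nat,
    [/\ s <= count X (iota 0 M), s <= count Y (iota 0 M) &
        forall x y, X x -> Y y -> x < y /\ c x y = false].

Definition comparable_sets (X Y : pred nat) : Prop :=
  (forall x y, X x -> Y y -> x < y) \/ (forall x y, Y x -> X y -> x < y).

Section BlueWalks.

Variables (c : nat -> nat -> bool) (M : nat) (B : nat -> pred nat).

Fixpoint walk_end (t : nat) : pred nat :=
  match t with
  | 0 => B 0
  | t'.+1 => fun v => B t'.+1 v && has (fun u => walk_end t' u && c u v) (iota 0 M)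
  end.

Lemma walk_end_block t v : walk_end t v -> B t v.
Proof. by case: t => [//|t] /andP[]. Qed.

Lemma walk_endP t v : walk_end t v ->
  exists w : nat -> nat, [/\ w t = v, forall i, i <= t -> B i (w i) &
    forall i, i < t -> c (w i) (w i.+1)].
Proof.
elim: t v => [|t IH] v /=.
  by move=> Bv; exists (fun _ => v); split=> // i; rewrite leqn0 => /eqP->.
case/andP=> Bv /hasP[u _ /andP[/IH[w [wt wB wc]] cuv]].
exists (fun i => if i == t.+1 then v else w i); split; first by rewrite eqxx.
  by move=> i it; case: eqP => [->//|ne]; apply: wB; lia.
move=> i it; rewrite (_ : (i == t.+1) = false); last by apply/eqP; lia.
by case: eqP => [[->]|ne]; [rewrite wt | apply: wc; lia].
Qed.

Hypothesis c_sym : forall i j, c i j = c j i.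
Variable s : nat.

(* One step of the walk: either at least s vertices of the next block are
   reached, or the vertices reached so far and the unreached part of the next
   block form a red pair. *)
Lemma walk_step t :
  (forall v, B t v -> v < M) -> count (B t.+1) (iota 0 M) = 2 * s ->
  comparable_sets (B t) (B t.+1) -> s <= count (walk_end t) (iota 0 M) ->
  s <= count (walk_end t.+1) (iota 0 M) \/ red_pair c M s.
Proof.
move=> BtM sizeB cmp reached.
pose missed v := B t.+1 v && ~~ walk_end t.+1 v.
have split_count := count_sub_split (iota 0 M) (@walk_end_block t.+1).
rewrite sizeB in split_count.
have [many_missed | few_missed] := leqP s (count missed (iota 0 M)); last first.
  by left; rewrite -/missed in split_count; lia.
right.
have red x y : walk_end t x -> missed y -> c x y = false.
  move=> Wx /andP[By]; rewrite /= By /= => /hasPn /(_ x).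
  rewrite mem_iota /= (BtM _ (walk_end_block Wx)) Wx /=.
  by move=> /(_ isT) /negbTE.
case: cmp => [below | above].
  exists (walk_end t), missed; split=> // x y Wx My.
  by split; [apply: below (walk_end_block Wx) (proj1 (andP My)) | apply: red].
exists missed, (walk_end t); split=> // x y Mx Wy.
split; first by apply: above (proj1 (andP Mx)) (walk_end_block Wy).
by rewrite c_sym; apply: red.
Qed.

Lemma walk_or_red_pair T :
  (forall t v, t <= T -> B t v -> v < M) ->
  (forall t, t <= T -> count (B t) (iota 0 M) = 2 * s) ->
  (forall t, t < T -> comparable_sets (B t) (B t.+1)) ->
  s <= count (walk_end T) (iota 0 M) \/ red_pair c M s.
Proof.
elim: T => [|T IH] BM sizeB cmp; first by left; rewrite /= sizeB //; lia.
have [reached|] := IH (fun t v tT => BM t v (leqW tT))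
  (fun t tT => sizeB t (leqW tT)) (fun t tT => cmp t (ltnW tT)); last by right.
by apply: walk_step => //; [move=> v; apply: BM | apply: sizeB | apply: cmp].
Qed.

End BlueWalks.

Lemma blue_path_or_red_pair n' (pos : {perm 'I_n'.+1}) c s M :
  (forall i j, c i j = c j i) -> 0 < s -> n'.+1 * (2 * s) <= M ->
  blue_path pos c (fun v => v < M) \/ red_pair c M s.
Proof.
move=> c_sym s_gt0 HM.
(* Step t of the walk visits the block of the vertex at position t. *)
pose Q t : 'I_n'.+1 := (pos^-1)%g (inord t).
pose B t := block (2 * s) (Q t).
have block_below (x : 'I_n'.+1) v : block (2 * s) x v -> v < M.
  by move=> /(block_bound (ltn_ord x)); lia.
have BM t v : t <= n' -> B t v -> v < M by move=> _; apply: block_below.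
have sizeB t : t <= n' -> count (B t) (iota 0 M) = 2 * s.
  move=> _; apply: count_block.
  by have := leq_mul (ltn_ord (Q t)) (leqnn (2 * s)); rewrite mulSn; lia.
have cmp t : t < n' -> comparable_sets (B t) (B t.+1).
  move=> tn; have : Q t != Q t.+1.
    by apply/eqP => /perm_inj/(congr1 (@nat_of_ord _)); rewrite !inordK; lia.
  by rewrite neq_ltn => /orP[lt|gt]; [left|right] => x y; apply: block_lt.
have [reached|] := walk_or_red_pair c_sym BM sizeB cmp; last by right.
have /hasP[v _ /walk_endP[w [_ wB wc]]] : has (walk_end c M B n') (iota 0 M).
  by rewrite has_count; lia.
have blockP (x : 'I_n'.+1) : block (2 * s) x (w (pos x)).
  by have := wB (pos x) (leq_ord _); rewrite /B /Q inord_val permK.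
left; exists (fun x => w (pos x)); split; [|split].
- by move=> x; apply: block_below (blockP x).
- by move=> x y xy; apply: block_lt xy (blockP x) (blockP y).
move=> x y; rewrite /ordered_path => /orP[] /eqP E; [rewrite c_sym|];
  rewrite E; apply: wc.
  by have := ltn_ord (pos x); rewrite E.
by have := ltn_ord (pos y); rewrite E.
Qed.

Lemma blue_path_transfer n (pos : {perm 'I_n}) c (h : nat -> nat) s (P : pred nat) :
  (forall i, i < s -> P (h i)) -> (forall i j, i < j -> j < s -> h i < h j) ->
  blue_path pos (fun i j => c (h i) (h j)) (fun v => v < s) -> blue_path pos c P.
Proof.
move=> hP h_incr [f [fs [f_incr f_blue]]].
exists (fun x => h (f x)); split; [|split] => [x|x y xy|x y /f_blue //].
  exact/hP/fs.
exact: h_incr (f_incr _ _ xy) (fs y).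
Qed.

Lemma red_clique_transfer c (h : nat -> nat) s (P : pred nat) m :
  (forall i, i < s -> P (h i)) -> (forall i j, i < j -> j < s -> h i < h j) ->
  red_clique (fun i j => c (h i) (h j)) (fun v => v < s) m -> red_clique c P m.
Proof.
move=> hP h_incr [g [gs g_red]].
exists (fun i => h (g i)); split=> [i im | i j ij jm]; first exact/hP/gs.
have [gij red] := g_red i j ij jm.
by split=> //; apply: h_incr gij (gs j jm).
Qed.

Lemma red_clique_join c (X Y Z : pred nat) m1 m2 :
  (forall v, X v -> Z v) -> (forall v, Y v -> Z v) ->
  (forall x y, X x -> Y y -> x < y /\ c x y = false) ->
  red_clique c X m1 -> red_clique c Y m2 -> red_clique c Z (m1 + m2).
Proof.
move=> XZ YZ XY [g1 [g1X g1_red]] [g2 [g2Y g2_red]].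
exists (fun i => if i < m1 then g1 i else g2 (i - m1)); split.
  by move=> i im; case: ifP => i1; [apply/XZ/g1X | apply/YZ/g2Y; lia].
move=> i j ij jm; case: ifP => i1; case: ifP => j1.
- exact: g1_red.
- by apply: XY; [apply: g1X | apply: g2Y; lia].
- lia.
- by apply: g2_red; lia.
Qed.

Lemma blue_path_or_red_clique n' (pos : {perm 'I_n'.+1}) l :
  forall c, (forall i j, c i j = c j i) -> forall M, (2 * n'.+1) ^ l <= M ->
  blue_path pos c (fun v => v < M) \/ red_clique c (fun v => v < M) (2 ^ l).
Proof.
elim: l => [|l IH] c c_sym M HM.
  by right; exists (fun=> 0); split=> [i|i j]; rewrite expn0 in HM *; lia.
set s := (2 * n'.+1) ^ l.
have HM' : n'.+1 * (2 * s) <= M by rewrite mulnA (mulnC n'.+1) -expnS.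
have s_gt0 : 0 < s by rewrite expn_gt0.
have [|[X [Y [sizeX sizeY XY]]]] := blue_path_or_red_pair pos c_sym s_gt0 HM'.
  by left.
have side (W : pred nat) : s <= count W (iota 0 M) ->
    blue_path pos c (fun v => v < M) \/
    red_clique c (fun v => W v && (v < M)) (2 ^ l).
  move=> /increasing_enum[h [hW h_incr]].
  have [blue|red] := IH (fun i j => c (h i) (h j)) (fun i j => c_sym _ _) s (leqnn s).
    by left; apply: blue_path_transfer blue => // i /hW /andP[].
  by right; apply: red_clique_transfer red.
have [|redX] := side X sizeX; first by left.
have [|redY] := side Y sizeY; first by left.
right; rewrite expnS mul2n -addnn.
apply: red_clique_join redX redY => [v /andP[]|v /andP[]|x y /andP[Xx _] /andP[Yy _]] //.
exact: XY.
Qed.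

Section Copies.

Variables (N : nat) (c : 'I_N -> 'I_N -> bool).
Hypothesis c_col : colouring c.

Definition nat_colouring (i j : nat) : bool :=
  match (insub i : option 'I_N), (insub j : option 'I_N) with
  | Some a, Some b => c a b
  | _, _ => false
  end.

Lemma nat_colouring_sym i j : nat_colouring i j = nat_colouring j i.
Proof.
by rewrite /nat_colouring; case: (insub i) => [a|]; case: (insub j) => [b|] //;
  rewrite c_col.
Qed.

Lemma nat_colouringE (a b : 'I_N) : nat_colouring a b = c a b.
Proof. by rewrite /nat_colouring !valK. Qed.

Lemma increasing_neq m (f : 'I_m -> 'I_N) x y :
  (forall i j : 'I_m, i < j -> f i < f j) -> x != y -> f x != f y.
Proof.
by move=> f_incr; rewrite neq_ltn => /orP[] /f_incr lt;
  rewrite neq_ltn lt ?orbT.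
Qed.

Lemma blue_copy n (pos : {perm 'I_n}) :
  blue_path pos nat_colouring (fun v => v < N) ->
  ord_contains (ordered_path pos) (blue_graph c).
Proof.
move=> [f [fN [f_incr f_blue]]].
have F_incr : forall x y : 'I_n, x < y -> Ordinal (fN x) < Ordinal (fN y) := f_incr.
exists (fun x => Ordinal (fN x)); split => // x y xy.
rewrite /blue_graph -nat_colouringE f_blue // andbT.
apply: increasing_neq F_incr _; apply/eqP => E.
by rewrite E /ordered_path orbb ltn_eqF in xy.
Qed.

Lemma red_copy m (eG : rel 'I_m) k :
  (forall x, ~~ eG x x) -> m <= k ->
  red_clique nat_colouring (fun v => v < N) k -> ord_contains eG (red_graph c).
Proof.
move=> eG_irr mk [g [gN g_red]].
have gN' (x : 'I_m) : g x < N by apply/gN/(leq_trans (ltn_ord x) mk).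
have g_red' (x y : 'I_m) : x < y ->
    Ordinal (gN' x) < Ordinal (gN' y) /\ c (Ordinal (gN' x)) (Ordinal (gN' y)) = false.
  by move=> xy; rewrite -nat_colouringE; apply: g_red xy (leq_trans _ mk).
exists (fun x => Ordinal (gN' x)); split=> [x y /g_red'[]//|x y xy].
have : x != y by apply: contraNneq (eG_irr x) => E; rewrite {2}E.
rewrite /red_graph neq_ltn => /orP[] /g_red'[lt red].
  by rewrite red neq_ltn lt.
by rewrite c_col red neq_ltn lt orbT.
Qed.

End Copies.

Lemma ordered_ramsey_number_le m k (eF : rel 'I_m) (eG : rel 'I_k) N :
  ramsey_arrow eF eG N ->
  exists r, is_ordered_ramsey_number eF eG r /\ r <= N.
Proof.
move=> arrowN.
have [r [[arrow_r least] _]] :=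
  @Wf_nat.dec_inh_nat_subset_has_unique_least_element (ramsey_arrow eF eG)
    (fun N' => classic _) (ex_intro _ N arrowN).
exists r; split; last by apply/leP; apply: least.
by split=> // N' /least /leP.
Qed.

Lemma pow_bound k n : n <= 2 ^ k -> (2 * n) ^ k <= 2 ^ (k * k.+1).
Proof.
move=> nk; rewrite (mulnC k) expnM.
by case: k nk => [|k] nk; rewrite ?expn0 // leq_exp2r // expnS leq_mul2l.
Qed.

Theorem corollaryc (n : nat) (pos : {perm 'I_n}) : 1 <= n ->
  exists r : nat,
    is_ordered_ramsey_number (ordered_path pos) (ordered_path pos) r /\
    r <= 2 ^ (up_log 2 n * (up_log 2 n).+1).
Proof.
case: n pos => [//|n'] pos _; set k := up_log 2 n'.+1.
have nk : n'.+1 <= 2 ^ k by apply: up_logP.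
have arrow : ramsey_arrow (ordered_path pos) (ordered_path pos) ((2 * n'.+1) ^ k).
  move=> c c_col.
  have [blue|red] := blue_path_or_red_clique pos (l := k) (nat_colouring_sym c_col) (leqnn _).
    by left; apply: blue_copy blue.
  have path_irr x : ~~ ordered_path pos x x by rewrite /ordered_path orbb ltn_eqF.
  by right; exact: (red_copy c_col path_irr nk red).
have [r [r_ramsey r_le]] := ordered_ramsey_number_le arrow.
by exists r; split=> //; apply: leq_trans r_le (pow_bound nk).
Qed.
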